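(* Assume the setting described in the context, and let $K\in\mathbb{N}$ and $\omega\in\Omega$. For every $d\in\mathbb{N}$, $\varepsilon\in(0,1)$ let $f_\varepsilon\in C(\mathbb{R},\mathbb{R})$ and $\Phi_{f_\varepsilon},\Phi_{g^d_\varepsilon}\in\mathbf{N}$ satisfy $\mathcal{R}(\Phi_{f_\varepsilon})=f_\varepsilon$ and $\mathcal{R}(\Phi_{g^d_\varepsilon})=g^d_\varepsilon$. For every $d\in\mathbb{N}$, $\varepsilon\in(0,1)$ let $U^{d,\theta,K,\varepsilon}_{n,m}\colon[0,T]\times\mathbb{R}^d\times\Omega\to\mathbb{R}$, $\theta\in\Theta$, $n,m\in\mathbb{Z}$, satisfy for all $\theta\in\Theta$, $n\in\mathbb{N}_0$, $m\in\mathbb{N}$, $t\in[0,T]$, $x\in\mathbb{R}^d$ $$U^{d,\theta,K,\varepsilon}_{n,m}(t,x)=\frac{\mathbb{1}_{\mathbb{N}}(n)}{m^n}\sum_{i=1}^{m^n}g^d_\varepsilon\big(X^{d,(\theta,0,-i),K,\varepsilon,t,x}_T\big)+\sum_{\ell=0}^{n-1}\frac{T-t}{m^{n-\ell}}\sum_{i=1}^{m^{n-\ell}}\Big(f_\varepsilon\circ U^{d,(\theta,\ell,i),K,\varepsilon}_{\ell,m}-\mathbb{1}_{\mathbb{N}}(\ell)\,f_\varepsilon\circ U^{d,(\theta,-\ell,i),K,\varepsilon}_{\ell-1,m}\Big)\Big(\mathfrak{T}^{(\theta,\ell,i)}_t,X^{d,(\theta,\ell,i),K,\varepsilon,t,x}_{\mathfrak{T}^{(\theta,\ell,i)}_t}\Big).$$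 Let $(c_{d,\varepsilon})_{d\in\mathbb{N},\varepsilon\in(0,1)}\subseteq\mathbb{R}$ satisfy $c_{d,\varepsilon}\ge2d+|||\mathcal{D}(\Phi_{f_\varepsilon})|||+|||\mathcal{D}(\Phi_{g^d_\varepsilon})|||+|||\mathcal{D}(\Phi_{\beta^d_\varepsilon})|||+|||\mathcal{D}(\Phi_{\sigma^d_\varepsilon,0})|||+|||\mathcal{D}(\Phi_{F^d_\varepsilon,0})|||$. Then for all $m\in\mathbb{N}$, $n\in\mathbb{N}_0$, $d\in\mathbb{N}$, $\varepsilon\in(0,1)$ there exists $(\Phi^{d,\theta,K,\varepsilon}_{n,m,t})_{t\in[0,T],\theta\in\Theta}\subseteq\mathbf{N}$ such that: (i) $\mathcal{D}(\Phi^{d,\theta_1,K,\varepsilon}_{n,m,t_1})=\mathcal{D}(\Phi^{d,\theta_2,K,\varepsilon}_{n,m,t_2})$ for all $t_1,t_2\in[0,T]$, $\theta_1,\theta_2\in\Theta$; (ii) for all $t\in[0,T]$, $\theta\in\Theta$: $\dim(\mathcal{D}(\Phi^{d,\theta,K,\varepsilon}_{n,m,t}))=(n+1)\big[K\big(\max\{\dim(\mathcal{D}(\Phi_{\beta^d_\varepsilon})),\dim(\mathcal{D}(\Phi_{\sigma^d_\varepsilon,0})),\dim(\mathcal{D}(\Phi_{F^d_\varepsilon,0}))\}-1\big)+1\big]+n(\dim(\mathcal{D}(\Phi_{f_\varepsilon}))-2)+\dim(\mathcal{D}(\Phi_{g^d_\varepsilon}))-1$; (iii) for all $t\in[0,T]$,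 $\theta\in\Theta$: $|||\mathcal{D}(\Phi^{d,\theta,K,\varepsilon}_{n,m,t})|||\le c_{d,\varepsilon}(3m)^n$; (iv) for all $t\in[0,T]$, $\theta\in\Theta$, $x\in\mathbb{R}^d$: $U^{d,\theta,K,\varepsilon}_{n,m}(t,x,\omega)=(\mathcal{R}(\Phi^{d,\theta,K,\varepsilon}_{n,m,t}))(x)$.
   Context: Setting. $T\in(0,\infty)$, $c\in[2,\infty)$, $f\in C(\mathbb{R},\mathbb{R})$. For each $d\in\mathbb{N}$: $\beta^d\in C(\mathbb{R}^d,\mathbb{R}^d)$, $\sigma^d\in C(\mathbb{R}^d,\mathbb{R}^{d\times d})$, $\gamma^d\in C(\mathbb{R}^{2d},\mathbb{R}^d)$, $g^d\in C(\mathbb{R}^d,\mathbb{R})$, $\nu^d$ a Lévy measure on $\mathcal{B}(\mathbb{R}^d\setminus\{0\})$, satisfying: (A1) there is $C_d$ with $\|\gamma^d(x,z)\|^2\le C_d(1\wedge\|z\|^2)$, $\|\gamma^d(x,z)-\gamma^d(y,z)\|^2\le C_d\|x-y\|^2(1\wedge\|z\|^2)$; (A2) $D_x\gamma^d(x,z)$ exists and for some $\lambda_d>0$, $\lambda_d\le|\det(I_d+\delta D_x\gamma^d(x,z))|$ for all $x,z$, $\delta\in[0,1]$; (A3) $\|\beta^d(x)-\beta^d(y)\|^2+\|\sigma^d(x)-\sigma^d(y)\|_F^2+\int\|\gamma^d(x,z)-\gamma^d(y,z)\|^2\nu^d(dz)\le c\|x-y\|^2$, $|f(w_1)-f(w_2)|^2\le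 c|w_1-w_2|^2$, $|g^d(x)-g^d(y)|^2\le cd^cT^{-1}\|x-y\|^2$, $\|\beta^d(0)\|^2+\|\sigma^d(0)\|_F^2+\int\|\gamma^d(0,z)\|^2\nu^d(dz)+T^3(|f(0)|+1)^2+T|g^d(0)|^2\le cd^c$ (integrals over $\mathbb{R}^d\setminus\{0\}$). For $d\in\mathbb{N}$, $\varepsilon\in(0,1)$: $\beta^d_\varepsilon\in C(\mathbb{R}^d,\mathbb{R}^d)$, $\sigma^d_\varepsilon\in C(\mathbb{R}^d,\mathbb{R}^{d\times d})$, $\gamma^d_\varepsilon\in C(\mathbb{R}^{2d},\mathbb{R}^d)$, $g^d_\varepsilon\in C(\mathbb{R}^d,\mathbb{R})$ satisfying: (B1) the analogue of (A1) with a constant $C_{d,\varepsilon}$; (B2) $\|\beta^d_\varepsilon(x)-\beta^d_\varepsilon(y)\|^2+\|\sigma^d_\varepsilon(x)-\sigma^d_\varepsilon(y)\|_F^2+\int\|\gamma^d_\varepsilon(x,z)-\gamma^d_\varepsilon(y,z)\|^2\nu^d(dz)\le c\|x-y\|^2$, $|g^d_\varepsilon(x)-g^d_\varepsilon(y)|^2\le cd^cT^{-1}\|x-y\|^2$, $\|\beta^d_\varepsilon(0)\|^2+\|\sigma^d_\varepsilon(0)\|_F^2+\int\|\gamma^d_\varepsilon(0,z)\|^2\nu^d(dz)+T|g^d_\varepsilon(0)|^2\le cd^c$, and $\|\beta^d_\varepsilon(x)-\beta^d(x)\|^2+\|\sigma^d_\varepsilon(x)-\sigma^d(x)\|_F^2+\int\|\gamma^d_\varepsilon(x,z)-\gamma^d(x,z)\|^2\nu^d(dz)+|g^d_\varepsilon(x)-g^d(x)|^2\le\varepsilon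 cd^c(d^c+\|x\|^2)$ for all $x,y$. Moreover, for every $d,\varepsilon$, $F^d_\varepsilon\colon\mathbb{R}^d\to\mathbb{R}^{d\times d}$ and $G^d\colon\mathbb{R}^d\to\mathbb{R}^d$ are measurable with $\gamma^d_\varepsilon(y,z)=F^d_\varepsilon(y)G^d(z)$; for every $v\in\mathbb{R}^d$, $\Phi_{\beta^d_\varepsilon},\Phi_{\sigma^d_\varepsilon,v},\Phi_{F^d_\varepsilon,v}\in\mathbf{N}$ satisfy $\beta^d_\varepsilon=\mathcal{R}(\Phi_{\beta^d_\varepsilon})$, $\sigma^d_\varepsilon(\cdot)v=\mathcal{R}(\Phi_{\sigma^d_\varepsilon,v})$, $F^d_\varepsilon(\cdot)v=\mathcal{R}(\Phi_{F^d_\varepsilon,v})$, $\mathcal{D}(\Phi_{\sigma^d_\varepsilon,v})=\mathcal{D}(\Phi_{\sigma^d_\varepsilon,0})$, $\mathcal{D}(\Phi_{F^d_\varepsilon,v})=\mathcal{D}(\Phi_{F^d_\varepsilon,0})$. Probability. $(\Omega,\mathcal{F},\mathbb{P},(\mathbb{F}_t)_{t\in[0,T]})$ a filtered probability space with the usual conditions; $\Theta=\bigcup_{n\in\mathbb{N}}\mathbb{Z}^n$; $\mathfrak{t}^\theta$, $\theta\in\Theta$, i.i.d. uniform on $[0,1]$, $\mathfrak{T}^\theta_t=t+(T-t)\mathfrak{t}^\theta$; for each $d$, $W^{d,\theta}$ i.i.d. standard $d$-dim $(\mathbb{F}_t)$-Brownian motions, $N^{d,\theta}$ independent $(\mathbb{F}_t)$-Poisson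 random measures on $[0,\infty)\times(\mathbb{R}^d\setminus\{0\})$ with compensator $\nu^d(dz)dt$, $\tilde N^{d,\theta}=N^{d,\theta}-\nu^d(dz)dt$; $\mathcal{F}_0$, $(\mathfrak{t}^\theta)$, $(N^{d,\theta})$, $(W^{d,\theta})$ independent. $\lfloor t\rfloor_K=\max(\{0,\frac TK,\dots,T\}\cap((-\infty,t)\cup\{0\}))$ and $X^{d,\theta,K,\varepsilon,t,x}$ on $[t,T]$ satisfies $X_s=x+\int_t^s\beta^d_\varepsilon(X_{\max\{t,\lfloor u-\rfloor_K\}})du+\int_t^s\sigma^d_\varepsilon(X_{\max\{t,\lfloor u-\rfloor_K\}})dW^{d,\theta}_u+\int_t^s\int_{\mathbb{R}^d\setminus\{0\}}\gamma^d_\varepsilon(X_{\max\{t,\lfloor u-\rfloor_K\}},z)\tilde N^{d,\theta}(dz,du)$. Networks. $\mathbf{A}_k$ componentwise ReLU; $\mathbf{N}=\bigcup_{H\in\mathbb{N}}\bigcup_{(k_0,\dots,k_{H+1})\in\mathbb{N}^{H+2}}\prod_{j=1}^{H+1}(\mathbb{R}^{k_j\times k_{j-1}}\times\mathbb{R}^{k_j})$; for $\Phi=((W_1,B_1),\dots,(W_{H+1},B_{H+1}))$: $\mathcal{D}(\Phi)=(k_0,\dots,k_{H+1})$, $\mathcal{R}(\Phi)\in C(\mathbb{R}^{k_0},\mathbb{R}^{k_{H+1}})$, $(\mathcal{R}(\Phi))(x_0)=W_{H+1}x_H+B_{H+1}$ with $x_j=\mathbf{A}_{k_j}(W_jx_{j-1}+B_j)$.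 For a vector $x=(x_1,\dots,x_k)$: $\dim(x)=k$, $|||x|||=\max_i|x_i|$. $\|\cdot\|$ Euclidean, $\|\cdot\|_F$ Frobenius norm. *)

From HB Require Import structures.
From mathcomp Require Import all_boot all_order all_algebra.
From Stdlib Require Rdefinitions.
From mathcomp Require Import Rstruct.
Notation R := Rdefinitions.R.
Set Implicit Arguments. Unset Strict Implicit. Unset Printing Implicit Defensive.
Import Order.TTheory GRing.Theory Num.Theory.
Local Open Scope ring_scope.

Inductive pnet : nat -> nat -> Type :=
| pLast : forall a b, 'M[R]_(b, a) -> 'cV[R]_b -> pnet a b
| pHid  : forall a b c, 'M[R]_(b, a) -> 'cV[R]_b -> pnet b c -> pnet a c.

Definition relu k (v : 'cV[R]_k) : 'cV[R]_k := map_mx (fun y : R => Num.max y 0) v.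

Fixpoint realize a b (Phi : pnet a b) : 'cV[R]_a -> 'cV[R]_b :=
  match Phi in pnet a b return 'cV[R]_a -> 'cV[R]_b with
  | pLast _ _ W B => fun x => W *m x + B
  | pHid _ _ _ W B rest => fun x => realize rest (relu (W *m x + B))
  end.

Fixpoint dims a b (Phi : pnet a b) : seq nat :=
  match Phi with
  | pLast a b _ _ => [:: a; b]
  | pHid a _ _ _ _ rest => a :: dims rest
  end.

(* Phi belongs to the set N: H >= 1 (i.e. at least H+2 >= 3 entries in D)  *)
Definition isANN a b (Phi : pnet a b) : bool :=
  leq 3 (size (dims Phi)) && all (fun k => leq 1 k) (dims Phi).

Definition supn (s : seq nat) : nat := \max_(k <- s) k.

Definition cst1 (x : R) : 'cV[R]_1 := const_mx x.
Definition sc (v : 'cV[R]_1) : R := v ord0 ord0.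

(* Index set Theta = U_{n in N} Z^n, represented by nonempty sequences.    *)
Definition inTheta (th : seq int) : Prop := leq 1 (size th).

Definition flrK (T : R) (K : nat) (u : R) : R :=
  \big[Num.max/0]_(k < K.+1 | (T * k%:R / K%:R < u) || (k == 0%N :> nat))
     (T * k%:R / K%:R).

Definition indN (n : nat) : R := if leq 1 n then 1 else 0.

From HB Require Import structures.
From mathcomp Require Import all_boot all_order all_algebra.
From Stdlib Require Rdefinitions.
From mathcomp Require Import Rstruct.
From mathcomp Require Import zify lra.
From Stdlib Require Import Classical IndefiniteDescription.
Import Order.TTheory GRing.Theory Num.Theory.
Local Open Scope ring_scope.

Set Implicit Arguments. Unset Strict Implicit. Unset Printing Implicit Defensive.

(* Work with ReLU networks whose hidden layers all have one width.  They
   compose (hidden depths add) and run in parallel (widths add), so linear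
   combinations of networks of equal depth are networks again, and
   [x = relu x - relu (- x)] realizes the identity at every depth, which also
   lets a network be deepened.  One Euler step is the identity plus the
   coefficient networks, so [X_s] is a composition of [K] such steps.
   Unrolling the MLP recursion, [U_{n,m}] is a linear combination of [m^n]
   copies of [g o X] and, for each [l < n], of [2 m^(n-l)] copies of networks
   for [f o U_l o X]; if the base width is [M], induction on [n] gives width
   [M (3m)^n], because [1 + 2 (1 + 3 + ... + 3^(n-1)) = 3^n]. *)

Lemma relu_col_mx m n (u : 'cV[R]_m) (v : 'cV[R]_n) :
  relu (col_mx u v) = col_mx (relu u) (relu v).
Proof. exact: map_col_mx. Qed.

Lemma relu_idem n (v : 'cV[R]_n) : relu (relu v) = relu v.
Proof.
apply/matrixP => i j; rewrite !mxE.
by have [h|/ltW h] := leP (v i j) 0; rewrite ?(max_r h) ?(max_l h) ?maxxx.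
Qed.

Lemma relu_subN n (v : 'cV[R]_n) : relu v - relu (- v) = v.
Proof.
apply/matrixP => i j; rewrite !mxE.
have [h|h] := leP (v i j) 0.
  by rewrite max_l ?oppr_ge0 // sub0r opprK.
by rewrite max_r ?subr0 // oppr_le0 ltW.
Qed.

Lemma relu_pid_mx S b (y : 'cV[R]_b) :
  relu ((pid_mx b : 'M[R]_(S, b)) *m y) = pid_mx b *m relu y.
Proof.
apply/matrixP => i j; rewrite !mxE.
case: (ltnP i b) => hi; last first.
  by rewrite !big1 ?maxxx // => k _; rewrite !mxE ltnNge hi andbF mul0r.
have pid_row (z : 'cV[R]_b) : \sum_k (pid_mx b : 'M[R]_(S, b)) i k * z k j = z (Ordinal hi) j.
  rewrite (bigD1 (Ordinal hi)) //= big1 ?addr0; first by rewrite mxE eqxx hi mul1r.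
  move=> k hk; rewrite mxE; case: eqP => [e|]; last by rewrite mul0r.
  by case/eqP: hk; apply: val_inj.
by rewrite !pid_row mxE.
Qed.

(* Networks whose hidden layers all have width [W], kept as a flat list of
   (weight, bias) pairs so that two networks of equal depth can be run in
   parallel layer by layer. *)
Record unet (a b W : nat) := UNet {
  in_layer : 'M[R]_(W, a) * 'cV[R]_W;
  hidden_layers : seq ('M[R]_W * 'cV[R]_W);
  out_layer : 'M[R]_(b, W) * 'cV[R]_b }.

Definition affine m n (p : 'M[R]_(m, n) * 'cV[R]_m) (v : 'cV[R]_n) := p.1 *m v + p.2.

Definition run_hidden W (hs : seq ('M[R]_W * 'cV[R]_W)) (v : 'cV[R]_W) :=
  foldl (fun v p => relu (affine p v)) v hs.

Definition unet_realize a b W (N : unet a b W) (x : 'cV[R]_a) : 'cV[R]_b :=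
  affine (out_layer N) (run_hidden (hidden_layers N) (relu (affine (in_layer N) x))).

Fixpoint pnet_of_layers W b (hs : seq ('M[R]_W * 'cV[R]_W))
    (out : 'M[R]_(b, W) * 'cV[R]_b) : pnet W b :=
  if hs is p :: hs' then pHid p.1 p.2 (pnet_of_layers hs' out) else pLast out.1 out.2.

Definition pnet_of_unet a b W (N : unet a b W) : pnet a b :=
  pHid (in_layer N).1 (in_layer N).2 (pnet_of_layers (hidden_layers N) (out_layer N)).

Lemma realize_pnet_of_unet a b W (N : unet a b W) :
  realize (pnet_of_unet N) =1 unet_realize N.
Proof.
move=> x; rewrite /unet_realize /=; move: (relu _) => v.
by elim: (hidden_layers N) v => [|p hs IH] v //=; rewrite IH.
Qed.

Lemma dims_pnet_of_unet a b W (N : unet a b W) :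
  dims (pnet_of_unet N) = a :: nseq (size (hidden_layers N)).+1 W ++ [:: b].
Proof. by rewrite /=; elim: (hidden_layers N) => [|p hs /= [->]]. Qed.

(* [realizable a b k W h]: [h] is the realization of a network with [k + 1]
   hidden layers, all of width [W]. *)
Definition realizable a b k W (h : 'cV[R]_a -> 'cV[R]_b) : Prop :=
  exists N : unet a b W, size (hidden_layers N) = k /\ unet_realize N =1 h.
Arguments realizable : clear implicits.

Section Realizable.
Variables (a b k W : nat).
Implicit Types h : 'cV[R]_a -> 'cV[R]_b.

Lemma realizable_ext h h' : realizable a b k W h -> h =1 h' -> realizable a b k W h'.
Proof. by move=> [N [HN HE]] hh'; exists N; split => // x; rewrite HE. Qed.

Lemma realizable_cst (B : 'cV[R]_b) : realizable a b k W (fun=> B).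
Proof.
exists (UNet (0, 0) (nseq k (0, 0)) (0, B)); split; first exact: size_nseq.
by move=> x; rewrite /unet_realize /affine /= mul0mx add0r.
Qed.

Lemma realizable_postaffine c h (A : 'M[R]_(c, b)) (B : 'cV[R]_c) :
  realizable a b k W h -> realizable a c k W (fun x => A *m h x + B).
Proof.
move=> [N [HN HE]].
exists (UNet (in_layer N) (hidden_layers N) (A *m (out_layer N).1, A *m (out_layer N).2 + B)).
by split=> // x; rewrite -HE /unet_realize /affine /= mulmxDr mulmxA addrA.
Qed.

Lemma realizable_scale h (r : R) :
  realizable a b k W h -> realizable a b k W (fun x => r *: h x).
Proof.
move/(realizable_postaffine r%:M 0)/realizable_ext; apply=> x.
by rewrite mul_scalar_mx addr0.
Qed.

Lemma realizable_deepen k' h : (k <= k')%N ->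
  realizable a b k W h -> realizable a b k' W h.
Proof.
move=> /subnK <-; elim: (k' - k)%N => [|j IH] //; rewrite addSn => /IH [N [HN HE]].
exists (UNet (in_layer N) ((1%:M, 0) :: hidden_layers N) (out_layer N)).
split=> [|x]; first by rewrite /= HN.
by rewrite -HE /unet_realize /= {2}/affine mul1mx addr0 relu_idem.
Qed.

End Realizable.

Lemma realizable_comp a b c k1 k2 W (h1 : 'cV[R]_a -> 'cV[R]_b) (h2 : 'cV[R]_b -> 'cV[R]_c) :
  realizable a b k1 W h1 -> realizable b c k2 W h2 ->
  realizable a c (k1 + k2).+1 W (h2 \o h1).
Proof.
move=> [N1 [HN1 HE1]] [N2 [HN2 HE2]].
pose glue := ((in_layer N2).1 *m (out_layer N1).1,
              (in_layer N2).1 *m (out_layer N1).2 + (in_layer N2).2).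
exists (UNet (in_layer N1) (hidden_layers N1 ++ glue :: hidden_layers N2) (out_layer N2)).
split=> [|x]; first by rewrite size_cat /= HN1 HN2 addnS.
rewrite /= -HE2 -HE1 /unet_realize /run_hidden /= foldl_cat /= /affine.
by rewrite mulmxDr mulmxA addrA.
Qed.

Definition block_layer W1 W2 (p : ('M[R]_W1 * 'cV[R]_W1) * ('M[R]_W2 * 'cV[R]_W2)) :
    'M[R]_(W1 + W2) * 'cV[R]_(W1 + W2) :=
  (block_mx p.1.1 0 0 p.2.1, col_mx p.1.2 p.2.2).

Lemma run_hidden_block W1 W2 hs1 hs2 (v1 : 'cV[R]_W1) (v2 : 'cV[R]_W2) :
  size hs1 = size hs2 ->
  run_hidden (map (@block_layer W1 W2) (zip hs1 hs2)) (col_mx v1 v2) =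
  col_mx (run_hidden hs1 v1) (run_hidden hs2 v2).
Proof.
elim: hs1 hs2 v1 v2 => [|p1 hs1 IH] [|p2 hs2] v1 v2 //= [] Hs.
rewrite -IH //; congr run_hidden.
rewrite /affine /= mul_block_col !mul0mx addr0 add0r add_col_mx.
exact: relu_col_mx.
Qed.

Lemma realizable_col_mx a b1 b2 k W1 W2 h1 h2 :
  realizable a b1 k W1 h1 -> realizable a b2 k W2 h2 ->
  realizable a (b1 + b2) k (W1 + W2) (fun x => col_mx (h1 x) (h2 x)).
Proof.
move=> [N1 [HN1 HE1]] [N2 [HN2 HE2]].
exists (UNet (col_mx (in_layer N1).1 (in_layer N2).1, col_mx (in_layer N1).2 (in_layer N2).2)
             (map (@block_layer W1 W2) (zip (hidden_layers N1) (hidden_layers N2)))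
             (block_mx (out_layer N1).1 0 0 (out_layer N2).1,
              col_mx (out_layer N1).2 (out_layer N2).2)).
split=> [|x]; first by rewrite size_map size_zip HN1 HN2 minnn.
rewrite -HE1 -HE2 /unet_realize /affine /= [col_mx _ _ *m x]mul_col_mx add_col_mx relu_col_mx.
by rewrite run_hidden_block ?HN1 ?HN2 // mul_block_col !mul0mx addr0 add0r add_col_mx.
Qed.

Lemma realizable_add a b k W1 W2 (h1 h2 : 'cV[R]_a -> 'cV[R]_b) :
  realizable a b k W1 h1 -> realizable a b k W2 h2 ->
  realizable a b k (W1 + W2) (fun x => h1 x + h2 x).
Proof.
move=> /realizable_col_mx H1 /H1/(realizable_postaffine (row_mx 1%:M 1%:M) 0).
by move/realizable_ext; apply=> x; rewrite mul_row_col !mul1mx addr0.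
Qed.

Lemma realizable_widen a b k W W' h : (W <= W')%N ->
  realizable a b k W h -> realizable a b k W' h.
Proof.
move=> /subnKC <- /realizable_add/(_ (realizable_cst a k (W' - W) 0)).
by move/realizable_ext; apply=> x; rewrite addr0.
Qed.

Lemma realizable_sum a b k n (w : 'I_n -> nat) (h : 'I_n -> 'cV[R]_a -> 'cV[R]_b) :
  (forall i, realizable a b k (w i) (h i)) ->
  realizable a b k (\sum_(i < n) w i) (fun x => \sum_(i < n) h i x).
Proof.
elim: n w h => [|n IH] w h Hh.
  by apply: realizable_ext (realizable_cst _ _ _ 0) _ => x; rewrite big_ord0.
rewrite big_ord_recr /=; apply: realizable_ext.
  exact: realizable_add (IH _ _ (fun i => Hh (widen_ord (leqnSn n) i))) (Hh ord_max).
by move=> x; rewrite big_ord_recr.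
Qed.

(* [x = relu x - relu (- x)] *)
Lemma realizable_id a k : realizable a a k (a + a) id.
Proof.
have run_id j (v : 'cV[R]_(a + a)) : run_hidden (nseq j (1%:M, 0)) (relu v) = relu v.
  by elim: j v => [|j IH] v //=; rewrite /affine mul1mx addr0 relu_idem IH.
exists (UNet (col_mx 1%:M (- 1%:M), 0) (nseq k (1%:M, 0)) (row_mx 1%:M (- 1%:M), 0)).
split=> [|x]; first exact: size_nseq.
rewrite /unet_realize /affine /= !addr0 run_id mul_col_mx relu_col_mx mul_row_col.
by rewrite !mul1mx !mulNmx !mul1mx relu_subN.
Qed.

Section PaddedLayers.
Variables (a b c S : nat) (A : 'M[R]_(b, a)) (B : 'cV[R]_b).
Hypothesis b_le_S : (b <= S)%N.

(* A layer of width [b] is padded to width [S] by [pid_mx b]. *)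
Lemma realizable_output_layer (A' : 'M[R]_(c, b)) (B' : 'cV[R]_c) :
  realizable a c 0 S (fun x => A' *m relu (A *m x + B) + B').
Proof.
exists (UNet (pid_mx b *m A, pid_mx b *m B) [::] (A' *m pid_mx b, B')); split=> // x.
rewrite /unet_realize /affine /= -[pid_mx b *m A *m x]mulmxA -mulmxDr relu_pid_mx.
by rewrite mulmxA -(mulmxA A') pid_mx_id // pid_mx_1 mulmx1.
Qed.

Lemma realizable_relu_layer k (h : 'cV[R]_b -> 'cV[R]_c) :
  realizable b c k S h -> realizable a c k.+1 S (fun x => h (relu (A *m x + B))).
Proof.
move=> [N [HN HE]].
exists (UNet (pid_mx b *m A, pid_mx b *m B)
             (((in_layer N).1 *m pid_mx b, (in_layer N).2) :: hidden_layers N) (out_layer N)).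
split=> [|x]; first by rewrite /= HN.
rewrite -HE /unet_realize /= /affine -[pid_mx b *m A *m x]mulmxA -mulmxDr relu_pid_mx.
by rewrite mulmxA -(mulmxA (in_layer N).1) pid_mx_id // pid_mx_1 mulmx1.
Qed.

End PaddedLayers.

Lemma supn_cons n s : supn (n :: s) = maxn n (supn s).
Proof. by rewrite /supn big_cons. Qed.

Lemma size_dims_ge2 a b (Phi : pnet a b) : (2 <= size (dims Phi))%N.
Proof. by elim: Phi => //= a' b' c' _ _ Phi IH; apply: leqW. Qed.

Lemma realizable_pnet_after_layer b c S (Phi : pnet b c) : (supn (dims Phi) <= S)%N ->
  forall a (A : 'M[R]_(b, a)) B,
  realizable a c (size (dims Phi) - 2) S (fun x => realize Phi (relu (A *m x + B))).
Proof.
elim: Phi S => [b' c' A' B' | b' b'' c' A' B' Phi IH] S /=;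
  rewrite supn_cons geq_max => /andP [b_le_S Phi_le_S] a A B.
  exact: realizable_output_layer.
have := realizable_relu_layer A B b_le_S (IH S Phi_le_S b' A' B').
by rewrite -addn1 addnBAC ?size_dims_ge2 // addn1.
Qed.

Lemma isANN_size a b (Phi : pnet a b) : isANN Phi -> (3 <= size (dims Phi))%N.
Proof. by case/andP. Qed.

Lemma realizable_pnet a b k S (Phi : pnet a b) (h : 'cV[R]_a -> 'cV[R]_b) :
  isANN Phi -> (size (dims Phi) - 3 <= k)%N -> (supn (dims Phi) <= S)%N ->
  (forall x, h x = realize Phi x) -> realizable a b k S h.
Proof.
case: Phi h => [//|a' b' c' A B Phi] h _ /=.
rewrite supn_cons geq_max subSS => size_le /andP [_ Phi_le_S] hE.
apply: realizable_deepen size_le (realizable_ext (realizable_pnet_after_layer Phi_le_S A B) _).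
by move=> x; rewrite hE.
Qed.

Section UniformDims.
Variables (a b k W : nat).
Let ds := a :: nseq k.+1 W ++ [:: b].

Lemma size_uniform : size ds = k.+3.
Proof. by rewrite /= size_cat size_nseq addn1. Qed.

Lemma isANN_uniform (Phi : pnet a b) : dims Phi = ds ->
  (0 < a)%N -> (0 < b)%N -> (0 < W)%N -> isANN Phi.
Proof.
rewrite /isANN => -> a_gt0 b_gt0 W_gt0.
by rewrite size_uniform /= a_gt0 all_cat all_nseq W_gt0 orbT /= b_gt0.
Qed.

Lemma supn_uniform_le : (a <= W)%N -> (b <= W)%N -> (supn ds <= W)%N.
Proof.
move=> a_le b_le; apply/bigmax_leqP_seq => i; rewrite inE mem_cat mem_nseq mem_seq1.
by case/or3P => [/eqP->|/andP[_ /eqP->]|/eqP->].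
Qed.
End UniformDims.

Lemma cst1D (x y : R) : cst1 (x + y) = cst1 x + cst1 y.
Proof. by apply/matrixP => i j; rewrite !mxE. Qed.

Lemma cst1B (x y : R) : cst1 (x - y) = cst1 x - cst1 y.
Proof. by apply/matrixP => i j; rewrite !mxE. Qed.

Lemma cst1M (a x : R) : cst1 (a * x) = a *: cst1 x.
Proof. by apply/matrixP => i j; rewrite !mxE. Qed.

Lemma cst1_sum n (F : 'I_n -> R) : cst1 (\sum_(i < n) F i) = \sum_(i < n) cst1 (F i).
Proof. by apply/matrixP => i j; rewrite summxE !mxE; apply: eq_bigr => k _; rewrite mxE. Qed.

Lemma scK : cancel sc cst1.
Proof. by move=> v; apply/matrixP => i j; rewrite mxE !ord1. Qed.

Lemma cst1K : cancel cst1 sc.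
Proof. by move=> x; rewrite /sc mxE. Qed.

Lemma realizable_pnet_scalar a k S (Phi : pnet a 1) (phi : 'cV[R]_a -> R) :
  isANN Phi /\ (forall x, phi x = sc (realize Phi x)) ->
  (size (dims Phi) - 3 <= k)%N -> (supn (dims Phi) <= S)%N ->
  realizable a 1 k S (fun x => cst1 (phi x)).
Proof.
move=> [ann phi_eq] size_le supn_le; apply: realizable_pnet ann size_le supn_le _ => x.
by rewrite phi_eq scK.
Qed.

Lemma realizable_pnet_activation k S (Phi : pnet 1 1) (phi : R -> R) :
  isANN Phi /\ (forall y, phi y = sc (realize Phi (cst1 y))) ->
  (size (dims Phi) - 3 <= k)%N -> (supn (dims Phi) <= S)%N ->
  realizable 1 1 k S (fun v => cst1 (phi (sc v))).
Proof.
by move=> [ann phi_eq]; apply: realizable_pnet_scalar; split=> // v; rewrite phi_eq scK.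
Qed.

Lemma realizable_scalar_family (I : Type) (P : I -> Prop) a k W (V : I -> 'cV[R]_a -> R) :
  (0 < a)%N -> (a <= W)%N ->
  (forall i, P i -> realizable a 1 k W (fun x => cst1 (V i x))) ->
  exists Phi : I -> pnet a 1, forall i, P i ->
    [/\ isANN (Phi i), dims (Phi i) = a :: nseq k.+1 W ++ [:: 1%N]
      & forall x, V i x = sc (realize (Phi i) x)].
Proof.
move=> a_gt0 a_le_W V_net.
have [N HN] : exists N : I -> unet a 1 W, forall i, P i ->
    size (hidden_layers (N i)) = k /\ forall x, unet_realize (N i) x = cst1 (V i x).
  apply: (functional_choice (fun i (Ni : unet a 1 W) => P i ->
    size (hidden_layers Ni) = k /\ forall x, unet_realize Ni x = cst1 (V i x))) => i.
  have [/V_net [Ni HNi]|notPi] := classic (P i); first by exists Ni.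
  by exists (UNet (0, 0) [::] (0, 0)).
exists (fun i => pnet_of_unet (N i)) => i /HN [sizeN realizeN].
have dimsN : dims (pnet_of_unet (N i)) = a :: nseq k.+1 W ++ [:: 1%N].
  by rewrite dims_pnet_of_unet sizeN.
split=> // [|x]; first exact: isANN_uniform dimsN a_gt0 _ (leq_trans a_gt0 a_le_W).
by rewrite realize_pnet_of_unet realizeN cst1K.
Qed.

Lemma flrK_grid (T : R) K s : exists2 k : nat,
  flrK T K s = T * k%:R / K%:R & (T * k%:R / K%:R < s) || (k == 0%N).
Proof.
rewrite /flrK; elim/big_rec: _ => [|i x Pi [k -> Hk]].
  by exists 0%N; rewrite ?eqxx ?orbT // mulr0 mul0r.
by case: leP => _; [exists k | exists i].
Qed.

Lemma flrK_lt (T : R) K s : 0 < s -> flrK T K s < s.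
Proof.
by move=> s_gt0; have [k -> /orP[//|/eqP->]] := flrK_grid T K s; rewrite mulr0 mul0r.
Qed.

Lemma flrK_le_grid (T : R) K s j : 0 < T -> (0 < K)%N ->
  s * K%:R <= T * j.+1%:R -> flrK T K s * K%:R <= T * j%:R.
Proof.
move=> T_gt0 K_gt0 s_le; have K_gt0' : 0 < K%:R :> R by rewrite ltr0n.
have [k -> /orP[k_lt|/eqP->]] := flrK_grid T K s; rewrite mulfVK ?lt0r_neq0 //; last first.
  by rewrite mulr0 mulr_ge0 ?ler0n ?ltW.
rewrite ler_pM2l // ler_nat -ltnS -(ltr_nat R) -(ltr_pM2l T_gt0).
apply: lt_le_trans s_le.
by rewrite -(ltr_pM2r K_gt0') mulfVK ?lt0r_neq0 in k_lt.
Qed.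

Section EulerScheme.
Variables (d K k E : nat) (T t : R).
Variables (Xt : 'cV[R]_d -> R -> 'cV[R]_d) (step : R -> R -> 'cV[R]_d -> 'cV[R]_d).
Hypotheses (T_gt0 : 0 < T) (K_gt0 : (0 < K)%N) (t_ge0 : 0 <= t) (dd_le_E : (d + d <= E)%N).
Hypothesis Xt_start : forall x, Xt x t = x.
Hypothesis Xt_step : forall x s, t < s <= T ->
  let r := Num.max t (flrK T K s) in Xt x s = step s r (Xt x r).
Hypothesis step_net : forall s r, realizable d d k E (step s r).

Let start_net k' : realizable d d k' E (Xt ^~ t).
Proof. exact: realizable_ext (realizable_widen dd_le_E (realizable_id d k')) _. Qed.

Lemma realizable_euler_grid j s : t <= s <= T -> s * K%:R <= T * j%:R ->
  realizable d d (j * k.+1) E (Xt ^~ s).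
Proof.
elim: j s => [|j IH] s /andP [t_le_s s_le_T] s_le.
  suff -> : s = t by exact: start_net.
  apply/eqP; rewrite eq_le t_le_s andbT (le_trans _ t_ge0) //.
  by rewrite mulr0 pmulr_lle0 ?ltr0n in s_le.
have [->|s_neq_t] := eqVneq s t; first exact: start_net.
have t_lt_s : t < s by rewrite lt_neqAle eq_sym s_neq_t.
set r := Num.max t (flrK T K s).
have r_net : realizable d d (j * k.+1) E (Xt ^~ r).
  have [->|r_neq_t] := eqVneq r t; first exact: start_net.
  have r_eq : r = flrK T K s.
    by move: r_neq_t; rewrite /r; case: leP => // _; rewrite eqxx.
  apply: IH; last by rewrite r_eq flrK_le_grid.
  rewrite le_max lexx /= r_eq ltW // (lt_le_trans (flrK_lt _ _ _)) //.
  exact: le_lt_trans t_lt_s.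
have -> : (j.+1 * k.+1 = (j * k.+1 + k).+1)%N by rewrite mulSnr addnS.
apply: realizable_ext (realizable_comp r_net (step_net s r)) _ => x /=.
by rewrite [RHS]Xt_step // t_lt_s.
Qed.

Lemma realizable_euler_scheme s : t <= s <= T -> realizable d d (K * k.+1) E (Xt ^~ s).
Proof.
move=> s_range; apply: realizable_euler_grid => //.
by apply: ler_wpM2r; [exact: ler0n | case/andP: s_range].
Qed.

End EulerScheme.

Lemma realizable_euler_step d k Sb Ss SF (beta : 'cV[R]_d -> 'cV[R]_d)
    (sigma F : 'cV[R]_d -> 'M[R]_d) (h : R) (v1 v2 : 'cV[R]_d) :
  realizable d d k Sb beta -> realizable d d k Ss (fun y => sigma y *m v1) ->
  realizable d d k SF (fun y => F y *m v2) ->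
  realizable d d k (d + d + Sb + Ss + SF)
    (fun y => y + h *: beta y + sigma y *m v1 + F y *m v2).
Proof.
move=> /(realizable_scale h)/(realizable_add (realizable_id d k)) beta_net sigma_net F_net.
exact: realizable_add (realizable_add beta_net sigma_net) F_net.
Qed.

Lemma realizable_euler_step_pnets d S (beta : 'cV[R]_d -> 'cV[R]_d)
    (sigma F : 'cV[R]_d -> 'M[R]_d) (Phib : pnet d d) (Phis PhiF : 'cV[R]_d -> pnet d d)
    (h : R) (v1 v2 : 'cV[R]_d) :
  isANN Phib /\ (forall x, beta x = realize Phib x) ->
  (forall v, isANN (Phis v) /\ (forall x, sigma x *m v = realize (Phis v) x) /\
             dims (Phis v) = dims (Phis 0)) ->
  (forall v, isANN (PhiF v) /\ (forall x, F x *m v = realize (PhiF v) x) /\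
             dims (PhiF v) = dims (PhiF 0)) ->
  (d + d + supn (dims Phib) + supn (dims (Phis 0%R)) + supn (dims (PhiF 0%R)) <= S)%N ->
  realizable d d
    (maxn (size (dims Phib)) (maxn (size (dims (Phis 0%R))) (size (dims (PhiF 0%R)))) - 3)%N
    S (fun y => y + h *: beta y + sigma y *m v1 + F y *m v2).
Proof.
move=> [b_ann b_eq] Hs HF S_ge; apply: realizable_widen S_ge _.
have [s_ann [s_eq s_dims]] := Hs v1; have [F_ann [F_eq F_dims]] := HF v2.
apply: realizable_euler_step.
- by apply: realizable_pnet b_ann _ _ b_eq => //; lia.
- by apply: realizable_pnet s_ann _ _ s_eq; rewrite s_dims //; lia.
- by apply: realizable_pnet F_ann _ _ F_eq; rewrite F_dims //; lia.
Qed.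

Lemma inTheta_cat th s : inTheta th -> inTheta (th ++ s).
Proof. by rewrite /inTheta size_cat => /leq_trans; apply; rewrite leq_addr. Qed.

Lemma tau_range (t T a : R) : 0 <= t <= T -> 0 <= a <= 1 -> t <= t + (T - t) * a <= T.
Proof. by move=> /andP [? ?] /andP [? ?]; apply/andP; split; nra. Qed.

Lemma geometric_sum3 n : (1 + 2 * \sum_(l < n) 3 ^ l = 3 ^ n)%N.
Proof. by elim: n => [|n IH]; rewrite ?big_ord0 // big_ord_recr expnS /= mulnDr addnA IH; lia. Qed.

Lemma mlp_width_rec (M m n : nat) :
  (\sum_(i < m ^ n) M + \sum_(l < n) \sum_(i < m ^ (n - l)) (M * (3 * m) ^ l + M * (3 * m) ^ l)
   = M * (3 * m) ^ n)%N.
Proof.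
rewrite sum_nat_const card_ord (eq_bigr (fun l : 'I_n => m ^ n * M * 2 * 3 ^ l)%N).
  by rewrite -big_distrr /= expnMn -geometric_sum3; move: (\sum_(i < n) 3 ^ i)%N; nia.
move=> l _; rewrite sum_nat_const card_ord expnMn.
have -> : (m ^ n = m ^ (n - l) * m ^ l)%N by rewrite -expnD subnK // ltnW.
nia.
Qed.

Section MLPRecursion.
Variables (d m kX kf kg M : nat) (T : R).
Variables (f : R -> R) (g : 'cV[R]_d -> R) (tt : seq int -> R).
Variables (X : seq int -> R -> 'cV[R]_d -> R -> 'cV[R]_d).
Variable U : seq int -> int -> R -> 'cV[R]_d -> R.
Hypothesis m_gt0 : (0 < m)%N.
Hypothesis tt_range : forall th, 0 <= tt th <= 1.
Hypothesis f_net : realizable 1 1 kf M (fun v => cst1 (f (sc v))).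
Hypothesis g_net : realizable d 1 kg M (fun x => cst1 (g x)).
Hypothesis X_net : forall th t s, inTheta th -> 0 <= t <= T -> t <= s <= T ->
  realizable d d kX M (fun x => X th t x s).
Hypothesis U_rec : forall th (n : nat) t x, inTheta th -> 0 <= t <= T ->
  U th n%:Z t x =
    indN n / (m ^ n)%:R * \sum_(i < m ^ n) g (X (th ++ [:: 0%Z; - (i.+1)%:Z]) t x T)
  + \sum_(l < n)
      ((T - t) / (m ^ (n - l))%:R *
       \sum_(i < m ^ (n - l))
         (let th1 := th ++ [:: l%:Z; (i.+1)%:Z] in
          let th2 := th ++ [:: - l%:Z; (i.+1)%:Z] in
          let tau := t + (T - t) * tt th1 in
          let y := X th1 t x tau in
          f (U th1 l%:Z tau y) - indN l * f (U th2 (l%:Z - 1) tau y))).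

Definition mlp_depth n := ((kX + kg).+1 + n * (kX + kf).+2)%N.
Definition mlp_width n := (M * (3 * m) ^ n)%N.

Let U_net l := forall th t, inTheta th -> 0 <= t <= T ->
  realizable d 1 (mlp_depth l) (mlp_width l) (fun x => cst1 (U th l%:Z t x)).

Lemma leq_mlp_width n : (M <= mlp_width n)%N.
Proof. by rewrite leq_pmulr // expn_gt0 muln_gt0 m_gt0. Qed.

Lemma mlp_width_mono l n : (l <= n)%N -> (mlp_width l <= mlp_width n)%N.
Proof. by move=> l_le_n; rewrite leq_mul2l leq_pexp2l ?orbT // muln_gt0 m_gt0. Qed.

Lemma realizable_g_term n th t : inTheta th -> 0 <= t <= T ->
  realizable d 1 (mlp_depth n) M (fun x => cst1 (g (X th t x T))).
Proof.
move=> th_ok t_range; have t_le_T : t <= T <= T by rewrite lexx andbT; case/andP: t_range.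
exact: realizable_deepen (leq_addr _ _) (realizable_comp (X_net th_ok t_range t_le_T) g_net).
Qed.

Lemma realizable_f_term n l th thX t tau : (l < n)%N -> U_net l ->
  inTheta th -> inTheta thX -> 0 <= t <= T -> t <= tau <= T ->
  realizable d 1 (mlp_depth n) (mlp_width l)
    (fun x => cst1 (f (U th l%:Z tau (X thX t x tau)))).
Proof.
move=> l_lt_n Ul th_ok thX_ok t_range tau_ge_t.
have tau_range : 0 <= tau <= T.
  by case/andP: tau_ge_t => /(le_trans (proj1 (andP t_range))) -> ->.
have XU_net := realizable_comp
  (realizable_widen (leq_mlp_width l) (X_net thX_ok t_range tau_ge_t)) (Ul th tau th_ok tau_range).
have fXU_net := realizable_comp XU_net (realizable_widen (leq_mlp_width l) f_net).
apply: realizable_deepen (realizable_ext fXU_net _).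
  by rewrite /mlp_depth -(subnKC l_lt_n); nia.
by move=> x /=; rewrite cst1K.
Qed.

Lemma realizable_correction_term n l th thX t tau : (l < n)%N ->
  (forall l', (l' < n)%N -> U_net l') ->
  inTheta th -> inTheta thX -> 0 <= t <= T -> t <= tau <= T ->
  realizable d 1 (mlp_depth n) (mlp_width l)
    (fun x => cst1 (indN l * f (U th (l%:Z - 1) tau (X thX t x tau)))).
Proof.
case: l => [|l] l_lt_n IH th_ok thX_ok t_range tau_range.
  by apply: realizable_ext (realizable_cst d _ _ (cst1 0)) _ => x; rewrite /indN mul0r.
have /(realizable_widen (mlp_width_mono (leqnSn l))) := realizable_f_term (ltnW l_lt_n)
  (IH l (ltnW l_lt_n)) th_ok thX_ok t_range tau_range.
move/(realizable_scale (indN l.+1))/realizable_ext; apply=> x.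
by rewrite cst1M -[l.+1]addn1 PoszD addrK.
Qed.

Lemma realizable_mlp_summand n l th1 th2 t : (l < n)%N ->
  (forall l', (l' < n)%N -> U_net l') ->
  inTheta th1 -> inTheta th2 -> 0 <= t <= T ->
  realizable d 1 (mlp_depth n) (mlp_width l + mlp_width l)
    (fun x => let tau := t + (T - t) * tt th1 in
              let y := X th1 t x tau in
              cst1 (f (U th1 l%:Z tau y) - indN l * f (U th2 (l%:Z - 1) tau y))).
Proof.
move=> l_lt_n IH th1_ok th2_ok t_range.
have tau_ok := tau_range t_range (tt_range th1).
have := realizable_add (realizable_f_term l_lt_n (IH l l_lt_n) th1_ok th1_ok t_range tau_ok)
  (realizable_scale (-1) (realizable_correction_term l_lt_n IH th2_ok th1_ok t_range tau_ok)).
by move/realizable_ext; apply=> x /=; rewrite cst1B scaleN1r.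
Qed.

Lemma realizable_mlp n : U_net n.
Proof.
elim/ltn_ind: n => n IH th t th_ok t_range.
have A_net := realizable_scale (indN n / (m ^ n)%:R) (realizable_sum (fun i : 'I_(m ^ n) =>
  realizable_g_term n (inTheta_cat [:: 0%Z; - (i.+1)%:Z] th_ok) t_range)).
have B_net (l : 'I_n) := realizable_scale ((T - t) / (m ^ (n - l))%:R)
  (realizable_sum (fun i : 'I_(m ^ (n - l)) => realizable_mlp_summand
    (th1 := th ++ [:: l%:Z; (i.+1)%:Z]) (th2 := th ++ [:: - l%:Z; (i.+1)%:Z])
    (ltn_ord l) IH (inTheta_cat _ th_ok) (inTheta_cat _ th_ok) t_range)).
rewrite /mlp_width -mlp_width_rec.
apply: realizable_ext (realizable_add A_net (realizable_sum B_net)) _ => x.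
rewrite U_rec // cst1D cst1M !cst1_sum; congr (_ + _).
by apply: eq_bigr => l _; rewrite cst1M cst1_sum.
Qed.

End MLPRecursion.

Lemma mlp_depth_bound K L Lf Lg n : (0 < K)%N -> (3 <= L)%N -> (3 <= Lf)%N -> (3 <= Lg)%N ->
  exists2 k, (mlp_depth (K * (L - 3).+1) (Lf - 3) (Lg - 3) n <= k)%N &
    k.+3 = (n.+1 * (K * (L - 1) + 1) + n * (Lf - 2) + Lg - 1)%N.
Proof.
by exists (n.+1 * (K * (L - 1) + 1) + n * (Lf - 2) + Lg - 1 - 3)%N; rewrite /mlp_depth; nia.
Qed.

Lemma base_width_bounds (c : R) d Sb Ss SF Sf Sg :
  2 * d%:R + Sf%:R + Sg%:R + Sb%:R + Ss%:R + SF%:R <= c ->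
  let M := (d + d + Sb + Ss + SF + Sf + Sg)%N in
  [/\ (d + d <= M)%N, (d + d + Sb + Ss + SF <= M)%N, (Sf <= M)%N, (Sg <= M)%N & M%:R <= c].
Proof. by move=> c_ge M; split; rewrite /M; try lia; rewrite !natrD; lra. Qed.

Theorem proposition5p12
  (T : R) (K : nat) (Omega : Type) (omega : Omega)
  (* approximating coefficients beta^d_eps, sigma^d_eps, F^d_eps, g^d_eps, f_eps *)
  (beta : forall d : nat, R -> 'cV[R]_d -> 'cV[R]_d)
  (sigma : forall d : nat, R -> 'cV[R]_d -> 'M[R]_d)
  (Fm : forall d : nat, R -> 'cV[R]_d -> 'M[R]_d)
  (g : forall d : nat, R -> 'cV[R]_d -> R)
  (f : R -> R -> R)
  (* networks *)
  (Phibeta : forall d : nat, R -> pnet d d)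
  (Phisigma : forall d : nat, R -> 'cV[R]_d -> pnet d d)
  (PhiF : forall d : nat, R -> 'cV[R]_d -> pnet d d)
  (Phif : R -> pnet 1 1)
  (Phig : forall d : nat, R -> pnet d 1)
  (* driving noise: Brownian motions W^{d,theta}, the jump processes
     Jp^{d,theta}_s = int_0^s int G^d(z) tilde N^{d,theta}(dz,du), and t^theta *)
  (W : forall d : nat, seq int -> Omega -> R -> 'cV[R]_d)
  (Jp : forall d : nat, seq int -> Omega -> R -> 'cV[R]_d)
  (tt : seq int -> Omega -> R)
  (* Euler processes X^{d,theta,K,eps,t,x}_s (omega) *)
  (X : forall d : nat, R -> seq int -> R -> 'cV[R]_d -> Omega -> R -> 'cV[R]_d)
  (* MLP approximations U^{d,theta,K,eps}_{n,m}(t,x,omega) *)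
  (U : forall d : nat, R -> seq int -> int -> int -> R -> 'cV[R]_d -> Omega -> R)
  (c : nat -> R -> R) :
  0 < T ->
  (0 < K)%N ->
  (* network representations of the coefficients *)
  (forall d eps, (0 < d)%N -> 0 < eps < 1 ->
     isANN (Phibeta d eps) /\ (forall x, beta d eps x = realize (Phibeta d eps) x)) ->
  (forall d eps, (0 < d)%N -> 0 < eps < 1 -> forall v : 'cV[R]_d,
     isANN (Phisigma d eps v) /\
     (forall x, sigma d eps x *m v = realize (Phisigma d eps v) x) /\
     dims (Phisigma d eps v) = dims (Phisigma d eps 0)) ->
  (forall d eps, (0 < d)%N -> 0 < eps < 1 -> forall v : 'cV[R]_d,
     isANN (PhiF d eps v) /\
     (forall x, Fm d eps x *m v = realize (PhiF d eps v) x) /\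
     dims (PhiF d eps v) = dims (PhiF d eps 0)) ->
  (forall eps, 0 < eps < 1 ->
     isANN (Phif eps) /\ (forall y, f eps y = sc (realize (Phif eps) (cst1 y)))) ->
  (forall d eps, (0 < d)%N -> 0 < eps < 1 ->
     isANN (Phig d eps) /\ (forall x, g d eps x = sc (realize (Phig d eps) x))) ->
  (* t^theta takes values in [0,1] *)
  (forall th w, 0 <= tt th w <= 1) ->
  (* X solves the Euler-type SDE (piecewise constant integrands, so the
     integrals are sums of increments over the pieces (max(t,floor_K(u-)), u]) *)
  (forall d eps th t (x : 'cV[R]_d) w, (0 < d)%N -> 0 < eps < 1 -> inTheta th ->
     0 <= t <= T ->
     X d eps th t x w t = x /\
     (forall s, t < s <= T ->
        let r := Num.max t (flrK T K s) in
        X d eps th t x w s =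
          X d eps th t x w r
          + (s - r) *: beta d eps (X d eps th t x w r)
          + sigma d eps (X d eps th t x w r) *m (W d th w s - W d th w r)
          + Fm d eps (X d eps th t x w r) *m (Jp d th w s - Jp d th w r))) ->
  (* the MLP recursion *)
  (forall d eps th (n m : nat) t (x : 'cV[R]_d) w,
     (0 < d)%N -> 0 < eps < 1 -> inTheta th -> (0 < m)%N -> 0 <= t <= T ->
     U d eps th n%:Z m%:Z t x w =
       indN n / (m ^ n)%:R *
         \sum_(i < m ^ n)
            g d eps (X d eps (th ++ [:: 0%Z; - (i.+1)%:Z]) t x w T)
     + \sum_(l < n)
         ((T - t) / (m ^ (n - l))%:R *
          \sum_(i < m ^ (n - l))
            (let th1 := th ++ [:: l%:Z; (i.+1)%:Z] in
             let th2 := th ++ [:: - l%:Z; (i.+1)%:Z] in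
             let tau := t + (T - t) * tt th1 w in
             let y := X d eps th1 t x w tau in
             f eps (U d eps th1 l%:Z m%:Z tau y w)
             - indN l * f eps (U d eps th2 (l%:Z - 1) m%:Z tau y w)))) ->
  (* the constants c_{d,eps} *)
  (forall d eps, (0 < d)%N -> 0 < eps < 1 ->
     c d eps >= 2 * d%:R + (supn (dims (Phif eps)))%:R
                 + (supn (dims (Phig d eps)))%:R
                 + (supn (dims (Phibeta d eps)))%:R
                 + (supn (dims (Phisigma d eps 0)))%:R
                 + (supn (dims (PhiF d eps 0)))%:R) ->
  forall (m n d : nat) (eps : R), (0 < m)%N -> (0 < d)%N -> 0 < eps < 1 ->
  exists Phi : R -> seq int -> pnet d 1,
    (forall t th, 0 <= t <= T -> inTheta th -> isANN (Phi t th)) /\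
    (* (i) *)
    (forall t1 t2 th1 th2, 0 <= t1 <= T -> 0 <= t2 <= T ->
       inTheta th1 -> inTheta th2 ->
       dims (Phi t1 th1) = dims (Phi t2 th2)) /\
    (* (ii) *)
    (forall t th, 0 <= t <= T -> inTheta th ->
       size (dims (Phi t th)) =
         (n.+1 * (K * (maxn (size (dims (Phibeta d eps)))
                        (maxn (size (dims (Phisigma d eps 0%R)))
                              (size (dims (PhiF d eps 0%R)))) - 1) + 1)
          + n * (size (dims (Phif eps)) - 2)
          + size (dims (Phig d eps)) - 1)%N) /\
    (* (iii) *)
    (forall t th, 0 <= t <= T -> inTheta th ->
       (supn (dims (Phi t th)))%:R <= c d eps * (3 * m%:R) ^+ n) /\
    (* (iv) *)
    (forall t th (x : 'cV[R]_d), 0 <= t <= T -> inTheta th ->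
       U d eps th n%:Z m%:Z t x omega = sc (realize (Phi t th) x)).
Proof.
move=> T_gt0 K_gt0 Hbeta Hsigma HF Hf Hg tt_range HX HU Hc m n d eps m_gt0 d_gt0 eps01.
set L := maxn _ (maxn _ _).
have [dd_le_M step_le_M f_le_M g_le_M M_le_c] := base_width_bounds (Hc d eps d_gt0 eps01).
set M := (d + d + _ + _ + _ + _ + _)%N in dd_le_M step_le_M f_le_M g_le_M M_le_c.
have X_net th t s : inTheta th -> 0 <= t <= T -> t <= s <= T ->
    realizable d d (K * (L - 3).+1) M (fun x => X d eps th t x omega s).
  move=> th_ok t_range; have X_eq x := HX d eps th t x omega d_gt0 eps01 th_ok t_range.
  apply: (realizable_euler_scheme (Xt := fun x s => X d eps th t x omega s)
    (step := fun s r y => y + (s - r) *: beta d eps y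
      + sigma d eps y *m (W d th omega s - W d th omega r)
      + Fm d eps y *m (Jp d th omega s - Jp d th omega r))
    T_gt0 K_gt0 (proj1 (andP t_range)) dd_le_M (fun x => (X_eq x).1) (fun x => (X_eq x).2)).
  by move=> s' r; apply: realizable_euler_step_pnets (Hbeta d eps d_gt0 eps01)
    (Hsigma d eps d_gt0 eps01) (HF d eps d_gt0 eps01) step_le_M.
have U_net := realizable_mlp (X := fun th t x s => X d eps th t x omega s)
  (U := fun th k t x => U d eps th k m%:Z t x omega) (tt := fun th => tt th omega)
  m_gt0 (fun th => tt_range th omega)
  (realizable_pnet_activation (Hf eps eps01) (leqnn _) f_le_M)
  (realizable_pnet_scalar (Hg d eps d_gt0 eps01) (leqnn _) g_le_M) X_net
  (fun th k t x th_ok t_range => HU d eps th k m t x omega d_gt0 eps01 th_ok m_gt0 t_range) n.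
have L_ge3 : (3 <= L)%N := leq_trans (isANN_size (Hbeta d eps d_gt0 eps01).1) (leq_maxl _ _).
have [k depth_le size_eq] := mlp_depth_bound n K_gt0 L_ge3
  (isANN_size (Hf eps eps01).1) (isANN_size (Hg d eps d_gt0 eps01).1).
have d_le_width : (d <= mlp_width m M n)%N.
  by rewrite (leq_trans (leq_addr d d)) // (leq_trans dd_le_M) // leq_mlp_width.
have [Phi HPhi] := realizable_scalar_family
  (P := fun i : R * seq int => 0 <= i.1 <= T /\ inTheta i.2) d_gt0 d_le_width
  (fun i '(conj t_range th_ok) => realizable_deepen depth_le (U_net i.2 i.1 th_ok t_range)).
have {}HPhi t th : 0 <= t <= T -> inTheta th -> _ :=
  fun t_range th_ok => HPhi (t, th) (conj t_range th_ok).
exists (fun t th => Phi (t, th)); split; [|split; [|split; [|split]]].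
- by move=> t th t_range th_ok; case: (HPhi t th t_range th_ok).
- move=> t1 t2 th1 th2 t1_range t2_range th1_ok th2_ok.
  by case: (HPhi t1 th1 t1_range th1_ok) => _ -> _; case: (HPhi t2 th2 t2_range th2_ok) => _ -> _.
- by move=> t th t_range th_ok; case: (HPhi t th t_range th_ok) => _ -> _; rewrite size_uniform.
- move=> t th t_range th_ok; case: (HPhi t th t_range th_ok) => _ -> _.
  apply: le_trans (_ : (mlp_width m M n)%:R <= _).
    by rewrite ler_nat supn_uniform_le // (leq_trans d_gt0).
  by rewrite natrM natrX natrM ler_wpM2r ?exprn_ge0 ?mulr_ge0 ?ler0n.
- by move=> t th x t_range th_ok; case: (HPhi t th t_range th_ok) => _ _ ->.
Qed.
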